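(* Let $G$ be a right modular groupoid and let $x \notin G$. Then $G \cup \{x\}$ can be made into a right modular groupoid that is a generalised inflation of $G$ (with respect to the decomposition $G_a = \{a\}$ for $a \neq c$, $G_c = \{c, x\}$ for some $c\in G$, and maps $\alpha_x,\beta_x$ for the new element $x$) if and only if there exist maps $\alpha_x, \beta_x : G \to G$ and an element $c \in G$ such that for all $a, b \in G$: (1) $(\alpha_x(a)\cdot a)\cdot b = (ba)\cdot \beta_x(ba)$; (2) $(a\cdot \beta_x(a))\cdot b = (b\cdot\beta_x(b))\cdot a$; (3) $(\alpha_x(c)\cdot \beta_x(c))\cdot a = (a\cdot\beta_x(a))\cdot \beta_x(a\cdot \beta_x(a))$.
   Context: A groupoid is a set with a binary operation, written $xy$ or $x\cdot y$. A groupoid $G$ is right modular if $xy\cdot z = zy\cdot x$ for all $x,y,z \in G$. A groupoid $H$ is a generalised inflation of its subgroupoid $U$ if $H = \bigcup_{u\in U} H_u$ where (1) $u \in H_u$ for all $u \in U$, (2) $H_u\cap H_v=\emptyset$ for $u\neq v$, (3) for every $y \in H$ there are maps $\alpha_y, \beta_y : U \to U$ such that for all $y \in H_u$ and $z \in H_v$ ($u,v\in U$) one has $yz = \alpha_y(v)\cdot \beta_z(u)$ (product computed in $U$), and (4) for $u \in U$, $\alpha_u$ and $\beta_u$ are both the constant map on $U$ with value $u$. In particular, with $U=G$, $H = G\cup\{x\}$ and $x \in H_c$, the multiplication involving $x$ is $xa = \alpha_x(a)\cdot a$, $ax = a\cdot\beta_x(a)$ for $a\in G$, and $xx = \alpha_x(c)\cdot\beta_x(c)$,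 while products of elements of $G$ are as in $G$. *)

Definition right_modular {T : Type} (mul : T -> T -> T) : Prop :=
  forall x y z : T, mul (mul x y) z = mul (mul z y) x.

(* (H, mulH) is a generalised inflation of its subgroupoid (U, mulU), where
   U is embedded in H via [emb], and [cls y = u] means y \in H_u.
   Using a function [cls] encodes that the H_u cover H and are pairwise
   disjoint; [cls (emb u) = u] encodes u \in H_u.  [alpha y] and [beta y]
   are the maps alpha_y, beta_y : U -> U. *)
Definition gen_inflation {U H : Type} (mulU : U -> U -> U) (mulH : H -> H -> H)
  (emb : U -> H) (cls : H -> U) (alpha beta : H -> U -> U) : Prop :=
  (forall u : U, cls (emb u) = u) /\
  (forall y z : H, mulH y z = emb (mulU (alpha y (cls z)) (beta z (cls y)))) /\
  (forall u v : U, alpha (emb u) v = u /\ beta (emb u) v = u).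

(* H = G \cup {x} is modelled as [option T], with [Some a] = a \in G and
   [None] = the new element x.  Decomposition: G_a = {a} for a <> c and
   G_c = {c, x}. *)
Definition ext_cls {T : Type} (c : T) (y : option T) : T :=
  match y with Some a => a | None => c end.


(* In a generalised inflation every product is computed in G from the
   classes of its factors, so right modularity of G ∪ {x} only has to be
   checked on the eight ways of placing x among the three variables.
   Two are trivial, one is right modularity of G, and the remaining five
   are conditions (1)-(3) or their symmetric forms.  Conversely, (1)-(3)
   are the instances (x a) b, (a x) b and (x x) a of right modularity. *)

Section OnePointInflation.

Context {T : Type} (mul : T -> T -> T).

Definition point_map (fx : T -> T) (y : option T) : T -> T :=
  match y with Some a => fun _ => a | None => fx end.

Definition inflation_mul (c : T) (alpha beta : option T -> T -> T)
    (y z : option T) : option T :=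
  Some (mul (alpha y (ext_cls c z)) (beta z (ext_cls c y))).

Lemma point_inflation_gen_inflation (c : T) (ax bx : T -> T) :
  gen_inflation mul (inflation_mul c (point_map ax) (point_map bx))
    (@Some T) (ext_cls c) (point_map ax) (point_map bx).
Proof. repeat split. Qed.

Section Conditions.

Context {ax bx : T -> T} {c : T}.

Hypothesis point_left : forall a b : T,
  mul (mul (ax a) a) b = mul (mul b a) (bx (mul b a)).
Hypothesis point_middle : forall a b : T,
  mul (mul a (bx a)) b = mul (mul b (bx b)) a.
Hypothesis point_square : forall a : T,
  mul (mul (ax c) (bx c)) a = mul (mul a (bx a)) (bx (mul a (bx a))).

Lemma point_inflation_right_modular :
  right_modular mul ->
  right_modular (inflation_mul c (point_map ax) (point_map bx)).
Proof.
  intros HG [a|] [b|] [d|]; unfold inflation_mul; simpl; f_equal.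
  (* [f_equal] already closes the two cases (x a) x and (x x) x. *)
  - apply HG.
  - symmetry; apply point_left.
  - apply point_middle.
  - symmetry; apply point_square.
  - apply point_left.
  - apply point_square.
Qed.

End Conditions.

Lemma inflation_right_modular_conditions
    {mulH : option T -> option T -> option T} {c : T}
    {alpha beta : option T -> T -> T} :
  right_modular mulH ->
  gen_inflation mul mulH (@Some T) (ext_cls c) alpha beta ->
  (forall a b : T, mul (mul (alpha None a) a) b
                   = mul (mul b a) (beta None (mul b a))) /\
  (forall a b : T, mul (mul a (beta None a)) b
                   = mul (mul b (beta None b)) a) /\
  (forall a : T, mul (mul (alpha None c) (beta None c)) a
                 = mul (mul a (beta None a)) (beta None (mul a (beta None a)))).
Proof.
  intros RM [_ [Hmul Hab]].
  assert (HA : forall u v, alpha (Some u) v = u) by (intros u v; apply Hab).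
  assert (HB : forall u v, beta (Some u) v = u) by (intros u v; apply Hab).
  assert (Some_inj : forall u v : T, Some u = Some v -> u = v)
    by (intros u v E; injection E; trivial).
  split; [|split]; [intros a b | intros a b | intros a]; apply Some_inj.
  - generalize (RM None (Some a) (Some b)).
    rewrite !Hmul; simpl; rewrite ?Hmul, !HA, !HB; trivial.
  - generalize (RM (Some a) None (Some b)).
    rewrite !Hmul; simpl; rewrite ?Hmul, !HA, !HB; trivial.
  - generalize (RM None None (Some a)).
    rewrite !Hmul; simpl; rewrite ?Hmul, !HA, !HB; trivial.
Qed.

End OnePointInflation.

Theorem theorem4 (T : Type) (mul : T -> T -> T) (HG : right_modular mul) :
  (exists (mulH : option T -> option T -> option T) (c : T)
          (alpha beta : option T -> T -> T),
      right_modular mulH /\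
      gen_inflation mul mulH (@Some T) (ext_cls c) alpha beta)
  <->
  (exists (ax bx : T -> T) (c : T),
      (forall a b : T, mul (mul (ax a) a) b = mul (mul b a) (bx (mul b a))) /\
      (forall a b : T, mul (mul a (bx a)) b = mul (mul b (bx b)) a) /\
      (forall a : T,
         mul (mul (ax c) (bx c)) a = mul (mul a (bx a)) (bx (mul a (bx a))))).
Proof.
  split.
  - intros [mulH [c [alpha [beta [RM Hinfl]]]]].
    exists (alpha None), (beta None), c.
    exact (inflation_right_modular_conditions mul RM Hinfl).
  - intros [ax [bx [c [H1 [H2 H3]]]]].
    exists (inflation_mul mul c (point_map ax) (point_map bx)), c,
      (point_map ax), (point_map bx).
    split.
    + exact (point_inflation_right_modular mul H1 H2 H3 HG).
    + apply point_inflation_gen_inflation.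
Qed.
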